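(* Let $M$ be a sparse paving matroid of rank $r$, and let $B_1$ and $B_2$ be disjoint bases of $M$. Then there is a cyclic ordering $(b_1,b_2,\dots,b_r,b_{r+1},\dots,b_{2r})$ of $B_1\cup B_2$ with $B_1=\{b_1,\dots,b_r\}$ and $B_2=\{b_{r+1},\dots,b_{2r}\}$ such that every set of $r$ cyclically-consecutive elements of this cyclic ordering is a basis of $M$.
   Context: A matroid $M$ of rank $r$ is sparse paving if every nonspanning circuit is a hyperplane; equivalently, every $r$-subset of $E(M)$ is a basis or a circuit-hyperplane. *)

From mathcomp Require Import all_boot.
Set Implicit Arguments. Unset Strict Implicit. Unset Printing Implicit Defensive.

Record matroid (T : finType) := Matroid {
  bases : {set {set T}};
  bases_nonempty : bases != set0;
  bases_exchange : forall B1 B2, B1 \in bases -> B2 \in bases ->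
    forall x, x \in B1 :\: B2 ->
    exists2 y, y \in B2 :\: B1 & (y |: (B1 :\ x)) \in bases
}.

Section MatroidNotions.
Variables (T : finType) (M : matroid T).

Definition is_basis (B : {set T}) : bool := B \in bases M.

Definition indep (I : {set T}) : bool := [exists B, is_basis B && (I \subset B)].

Definition rk (X : {set T}) : nat :=
  \max_(I : {set T} | indep I && (I \subset X)) #|I|.

Definition mrank : nat := rk setT.

Definition spanning (X : {set T}) : bool := rk X == mrank.

Definition circuit (C : {set T}) : bool :=
  ~~ indep C && [forall x in C, indep (C :\ x)].

Definition hyperplane (H : {set T}) : bool :=
  ~~ spanning H && [forall x in ~: H, spanning (x |: H)].

Definition sparse_paving : Prop :=
  forall C, circuit C -> ~~ spanning C -> hyperplane C.

End MatroidNotions.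

From mathcomp Require Import all_boot zify.
Set Implicit Arguments. Unset Strict Implicit. Unset Printing Implicit Defensive.

(* Two circuit-hyperplanes of a matroid cannot differ by a single exchange, so
   in a sparse paving matroid of rank r, of two r-sets differing by one
   exchange at least one is a basis; nothing else about the matroid is used.
   Call an r-subset X of B1 ∪ B2 good when X and its complement are bases, and
   walk from B1 to B2, each step trading an element of X ∩ B1 for one of
   B2 \ X while staying good; the traded elements, in order, form the cyclic
   ordering.  With m = |X ∩ B1| >= 3 there are m^2 possible trades, of which at
   most m spoil X and at most m spoil its complement.  At m = 2 the walk can be
   stuck in a single 2x2 configuration: this is avoided by re-routing the
   trade made at m = 3, and it cannot occur at the start when r = 2. *)

(* [set_solve] proves identities between sets built from named points by
   comparing a generic element with each point; [set_simpl] discharges the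
   resulting memberships and point (dis)equalities from the membership facts in
   the context. *)
Ltac set_simpl :=
  repeat match goal with
  | H : is_true (?p \in ?A) |- context [?p \in ?A] => rewrite H
  | H : is_true (?p \notin ?A) |- context [?p \in ?A] => rewrite (negbTE H)
  | H : is_true (?p != ?q) |- context [?p == ?q] => rewrite (negbTE H)
  | H : is_true (?p != ?q) |- context [?q == ?p] => rewrite [q == p]eq_sym (negbTE H)
  | H : is_true (?p \in ?A), H' : is_true (?q \notin ?A) |- context [?p == ?q] =>
      rewrite (negbTE (memPn H' p H))
  | H : is_true (?p \in ?A), H' : is_true (?q \notin ?A) |- context [?q == ?p] =>
      rewrite [q == p]eq_sym (negbTE (memPn H' p H))
  | |- context [?p == ?p] => rewrite eqxx
  end; rewrite /= ?andbT ?andbF ?orbT ?orbF.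

Ltac set_solve :=
  let z := fresh "z" in
  apply/setP => z; rewrite !(inE, mem_cat);
  repeat match goal with
  | |- context [z == ?p] => case: (eqVneq z p) => [? | ?]; first subst z
  end; set_simpl => //;
  repeat match goal with
  | |- context [z \in ?A] => case: (z \in A) => //
  end.

Section Exchange.
Variable T : finType.
Implicit Types (X E : {set T}) (a b c : T).

Definition exchange X a b : {set T} := b |: X :\ a.

Lemma card_exchange X a b : a \in X -> b \notin X -> #|exchange X a b| = #|X|.
Proof.
by move=> aX bX; rewrite cardsU1 !inE negb_and bX orbT (cardsD1 a X) aX add1n.
Qed.

Lemma exchange_subset X E a b : X \subset E -> b \in E -> exchange X a b \subset E.
Proof.
by move=> sXE bE; rewrite subUset sub1set bE (subset_trans (subD1set X a)).
Qed.

Lemma setD_exchange X E a b : a \in E -> b \in E -> a \in X -> b \notin X ->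
  E :\: exchange X a b = exchange (E :\: X) b a.
Proof. by move=> aE bE aX bX; rewrite /exchange; set_solve. Qed.

Lemma exchange_exchange_target X a b c : b \notin X ->
  exchange (exchange X a b) b c = exchange X a c.
Proof. by move=> bX; rewrite /exchange; set_solve. Qed.

Lemma exchange_exchange_source X a b c : a \in X -> c != a -> c != b ->
  exchange (exchange X a b) c a = exchange X c b.
Proof. by move=> aX ca cb; rewrite /exchange; set_solve. Qed.

Lemma subset_card_setU1 (A B : {set T}) : A \subset B -> #|B| = #|A|.+1 ->
  exists2 t, t \notin A & B = t |: A.
Proof.
move=> sAB cB; have /cards1P [t eD] : #|B :\: A| == 1 by rewrite cardsD (setIidPr sAB) cB subSnn.
have tBA : t \in B :\: A by rewrite eD set11.
exists t; first by move: tBA; rewrite inE => /andP [].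
by rewrite -eD setUC -{1}(setID B A) (setIidPr sAB).
Qed.

End Exchange.

Section SparsePaving.
Variables (T : finType) (M : matroid T).
Implicit Types (B I X C D : {set T}).

Lemma basis_card B B' : is_basis M B -> is_basis M B' -> #|B| = #|B'|.
Proof.
move=> hB hB'; move Hn: #|B :\: B'| => n.
elim: n B hB Hn => [|n IH] B hB.
  move/eqP; rewrite cards_eq0 setD_eq0 => sBB'.
  suff -> : B = B' by [].
  apply/eqP; rewrite eqEsubset sBB'; apply/subsetP => x xB'.
  apply/negPn/negP => xB.
  have [|y] := bases_exchange hB' hB (x := x); first by rewrite inE xB xB'.
  by rewrite inE => /andP [/negP yB' /(subsetP sBB')].
move=> cD; have /set0Pn [x xD] : B :\: B' != set0 by rewrite -card_gt0 cD.
have [y yD hB''] := bases_exchange hB hB' xD.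
move: xD yD; rewrite !inE => /andP [xB' xB] /andP [yB yB'].
rewrite -(card_exchange xB yB) (IH _ hB'') //.
have -> : exchange B x y :\: B' = (B :\: B') :\ x by rewrite /exchange; set_solve.
by move: cD; rewrite (cardsD1 x) !inE xB xB' => -[].
Qed.

Lemma basis_indep B : is_basis M B -> indep M B.
Proof. by move=> hB; apply/existsP; exists B; rewrite hB subxx. Qed.

Lemma indep0 : indep M set0.
Proof.
have /set0Pn [B hB] := bases_nonempty M.
by apply/existsP; exists B; rewrite /is_basis hB sub0set.
Qed.

Lemma indep_card_le I B : indep M I -> is_basis M B -> #|I| <= #|B|.
Proof.
case/existsP => B' /andP [hB' sIB'] hB; rewrite -(basis_card hB' hB).
exact: subset_leq_card.
Qed.

Lemma indep_card_basis I B : indep M I -> is_basis M B -> #|B| <= #|I| -> is_basis M I.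
Proof.
case/existsP => B' /andP [hB' sIB'] hB cBI.
suff -> : I = B' by [].
by apply/eqP; rewrite eqEcard sIB' (basis_card hB' hB).
Qed.

Lemma mrank_basis B : is_basis M B -> mrank M = #|B|.
Proof.
move=> hB; apply/eqP; rewrite eqn_leq; apply/andP; split.
  by apply/bigmax_leqP => I /andP [hI _]; apply: indep_card_le.
by rewrite /mrank /rk (leq_bigmax_cond (F := fun I => #|I|)) // basis_indep ?subsetT.
Qed.

Lemma spanning_sub_basis X : spanning M X -> exists2 B, is_basis M B & B \subset X.
Proof.
have /set0Pn [B0 hB0] := bases_nonempty M.
rewrite /spanning (mrank_basis hB0) /rk => /eqP.
have [|I] := @eq_bigmax_cond _ [pred I | indep M I && (I \subset X)] (fun I => #|I|).
  by apply/card_gt0P; exists set0; rewrite inE indep0 sub0set.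
rewrite inE => /andP [hI sIX] ->.
by move=> cI; exists I => //; apply: (indep_card_basis hI hB0); rewrite cI.
Qed.

Lemma dependent_sub_circuit D : ~~ indep M D -> exists2 C, circuit M C & C \subset D.
Proof.
move=> dD.
have [|C /minsetP [/andP [dC sCD] minC]] :=
  @ex_minset _ [pred C | ~~ indep M C && (C \subset D)].
  by exists D; rewrite inE dD subxx.
exists C => //; rewrite /circuit dC; apply/forall_inP => x xC.
apply: contraT => dCx.
have /setP /(_ x) : C :\ x = C.
  by apply: minC; rewrite ?inE ?dCx ?subD1set ?(subset_trans (subD1set C x) sCD).
by rewrite !inE eqxx xC.
Qed.

Lemma nonbasis_circuit_hyperplane X : sparse_paving M -> #|X| = mrank M ->
  ~~ is_basis M X -> circuit M X && hyperplane M X.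
Proof.
move=> hsp cX nX; have /set0Pn [B0 hB0] := bases_nonempty M.
rewrite (mrank_basis hB0) in cX.
have nspan (Y : {set T}) : Y \subset X -> ~~ spanning M Y.
  move=> sYX; apply/negP => /spanning_sub_basis [B hB sBY].
  suff eBX : B = X by rewrite -eBX hB in nX.
  by apply/eqP; rewrite eqEcard (subset_trans sBY sYX) cX (basis_card hB0 hB) leqnn.
have [|C hC sCX] := dependent_sub_circuit (D := X).
  by apply: contra nX => hX; apply: (indep_card_basis hX hB0); rewrite cX.
have hH := hsp C hC (nspan C sCX).
suff eCX : C = X by rewrite -eCX hC hH.
apply/eqP; rewrite eqEsubset sCX; apply/subsetP => x xX; apply: contraT => xC.
have sxCX : x |: C \subset X by rewrite subUset sub1set xX.
by move: hH (nspan _ sxCX) => /andP [_ /forall_inP /(_ x)]; rewrite inE => /(_ xC) ->.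
Qed.

Lemma sparse_paving_exchange X a b : sparse_paving M -> #|X| = mrank M ->
  a \in X -> b \notin X -> is_basis M X || is_basis M (exchange X a b).
Proof.
move=> hsp cX aX bX; apply: contraT => /norP [nX nXab].
have ab : a != b by apply: contraNneq bX => <-.
have /andP [/andP [_ /forall_inP indX] /andP [_ /forall_inP spanX]] :=
  nonbasis_circuit_hyperplane hsp cX nX.
have [B' /andP [hB' sXB']] := existsP (indX a aX).
have [t tX eB'] : exists2 t, t \notin X :\ a & B' = t |: X :\ a.
  apply: (subset_card_setU1 sXB').
  by rewrite -(mrank_basis hB') -cX (cardsD1 a X) aX.
have ta : t != a by apply: contraNneq nX => eta; rewrite -(setD1K aX) -{1}eta -eB'.
have tb : t != b by apply: contraNneq nXab => etb; rewrite /exchange -etb -eB'.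
have [I hI sIbX] := spanning_sub_basis (spanX b (ltac:(by rewrite inE))).
have tI : t \notin I.
  by apply: contra tX => /(subsetP sIbX); rewrite !inE (negbTE tb) ta.
have [|u] := bases_exchange hB' hI (x := t); first by rewrite inE tI eB' setU11.
rewrite eB' setU1K // inE => /andP [uB' uI] hu.
have /orP [/eqP eub | uX] : (u == b) || (u \in X) by rewrite -in_setU1 (subsetP sIbX).
  by rewrite /exchange /is_basis -eub hu in nXab.
have eua : u = a by apply: contraNeq uB' => ua; rewrite !inE ua uX orbT.
by rewrite eua setD1K // in hu; rewrite /is_basis hu in nX.
Qed.

End SparsePaving.

Lemma take_rot_cat (U : Type) (s1 s2 : seq U) i : size s1 = size s2 -> i <= size s1 ->
  take (size s1) (rot i (s1 ++ s2)) = drop i s1 ++ take i s2.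
Proof.
move=> sz le_i.
have edrop : drop i (s1 ++ s2) = drop i s1 ++ s2.
  rewrite drop_cat; case: ltnP => // ge_i.
  have -> : i = size s1 by apply/eqP; rewrite eqn_leq le_i.
  by rewrite subnn drop0 drop_size.
rewrite /rot edrop -catA take_cat size_drop ltnNge leq_subr /= subKn //.
by rewrite takel_cat // -sz.
Qed.

Lemma take_rot_addn_cat (U : Type) (s1 s2 : seq U) j : size s1 = size s2 -> j <= size s1 ->
  take (size s1) (rot (size s1 + j) (s1 ++ s2)) = drop j s2 ++ take j s1.
Proof.
move=> sz le_j; rewrite [size s1 + j]addnC rotD; last by rewrite size_cat addnC leq_add2l -sz.
by rewrite rot_size_cat sz take_rot_cat // -sz.
Qed.

Lemma setD_cat_uniq (U : finType) (s1 s2 : seq U) : uniq (s1 ++ s2) ->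
  [set z in s1 ++ s2] :\: [set z in s1] = [set z in s2].
Proof.
rewrite cat_uniq => /and3P [_ /hasPn dis _]; apply/setP => z; rewrite !inE mem_cat.
by case: (boolP (z \in s2)) => [/dis/negbTE -> | _]; rewrite ?orbF ?andNb.
Qed.

Lemma setD_drop_take_cat (U : finType) (s1 s2 : seq U) k : uniq (s1 ++ s2) ->
  [set z in s1 ++ s2] :\: [set z in drop k s1 ++ take k s2] = [set z in drop k s2 ++ take k s1].
Proof.
have pe : perm_eq (s1 ++ s2) ((drop k s1 ++ take k s2) ++ (drop k s2 ++ take k s1)).
  apply/permP => p; rewrite !count_cat.
  rewrite -{1}(cat_take_drop k s1) -{1}(cat_take_drop k s2) !count_cat; lia.
rewrite (perm_uniq pe) => /setD_cat_uniq <-.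
by congr (_ :\: _); apply/setP => z; rewrite !inE (perm_mem pe).
Qed.

(* The trades of the two points u, v of X ∩ B1 against the two points x, y of
   B2 \ X form a 2x2 grid; [g] and [h] record whether the traded set, resp. its
   complement, is good. *)
Lemma grid2_blocked (gux guy gvx gvy hux huy hvx hvy : bool) :
  gux || guy -> gvx || gvy -> gux || gvx -> guy || gvy ->
  hux || hvx -> huy || hvy -> hux || huy -> hvx || hvy ->
  ~~ gux || ~~ hux -> ~~ guy || ~~ huy -> ~~ gvx || ~~ hvx -> ~~ gvy || ~~ hvy ->
  [&& ~~ gux, ~~ gvy, ~~ huy & ~~ hvx] || [&& ~~ guy, ~~ gvx, ~~ hux & ~~ hvy].
Proof.
by case: gux; case: guy; case: gvx; case: gvy; case: hux; case: huy; case: hvx; case: hvy.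
Qed.

Section CyclicOrdering.
Variables (T : finType) (good : {set T} -> bool) (r : nat) (B1 B2 : {set T}).
Hypotheses (good_B1 : good B1) (good_B2 : good B2).
Hypotheses (card_B1 : #|B1| = r) (card_B2 : #|B2| = r) (disjoint_B12 : [disjoint B1 & B2]).
Hypothesis good_exchange : forall (X : {set T}) a b, #|X| = r -> a \in X -> b \notin X ->
  good X || good (exchange X a b).

Local Notation E := (B1 :|: B2).
Implicit Types (X : {set T}) (a b u v x y : T) (ta tb : seq T).

Lemma B1_notin_B2 z : z \in B1 -> z \notin B2.
Proof. by move=> zB1; rewrite (disjointFr disjoint_B12 zB1). Qed.

Lemma B2_notin_B1 z : z \in B2 -> z \notin B1.
Proof. by apply: contraTN => /B1_notin_B2. Qed.

Lemma good_of_bad_exchange X a b : #|X| = r -> a \in X -> b \notin X ->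
  ~~ good (exchange X a b) -> good X.
Proof. by move=> cX aX bX /negbTE bad; have := good_exchange cX aX bX; rewrite bad orbF. Qed.

Lemma good_exchange_targets X a b b' : #|X| = r -> a \in X -> b \notin X -> b' \notin X ->
  b != b' -> good (exchange X a b) || good (exchange X a b').
Proof.
move=> cX aX bX b'X bb'; rewrite -(exchange_exchange_target a b' bX).
by apply: good_exchange; rewrite ?card_exchange // !inE; set_simpl.
Qed.

Lemma good_exchange_sources X a a' b : #|X| = r -> a \in X -> a' \in X -> b \notin X ->
  a != a' -> good (exchange X a b) || good (exchange X a' b).
Proof.
move=> cX aX a'X bX aa'; have a'b : a' != b by apply: contraTneq a'X => ->.
rewrite -(exchange_exchange_source aX (_ : a' != a) a'b) 1?eq_sym //.
by apply: good_exchange; rewrite ?card_exchange // !inE; set_simpl.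
Qed.

Lemma card_E : #|E| = r + r.
Proof. by rewrite cardsU (disjoint_setI0 disjoint_B12) cards0 subn0 card_B1 card_B2. Qed.

Lemma card_setD_E X : X \subset E -> #|X| = r -> #|E :\: X| = r.
Proof. by move=> sXE cX; rewrite cardsDS // card_E cX addnK. Qed.

Lemma card_B2_setD X : X \subset E -> #|X| = r -> #|B2 :\: X| = #|X :&: B1|.
Proof.
move=> sXE cX; have := cardsID B1 X; have := cardsID X B2.
have -> : X :\: B1 = X :&: B2.
  apply/setP => z; rewrite !inE; case zX: (z \in X); rewrite ?andbF //=.
  by move: (subsetP sXE z zX); rewrite inE; case: (boolP (z \in B1)) => // /B1_notin_B2/negbTE ->.
by rewrite setIC card_B2 cX; lia.
Qed.

Lemma exchange_setI_B1 X a b : a \in B1 -> b \in B2 -> exchange X a b :&: B1 = (X :&: B1) :\ a.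
Proof. by move=> aB1 /B2_notin_B1 bB1; rewrite /exchange; set_solve. Qed.

Lemma card_exchange_setI_B1 X a b : a \in X :&: B1 -> b \in B2 ->
  #|exchange X a b :&: B1| = #|X :&: B1|.-1.
Proof.
move=> aA bB2; move: (aA) => /setIP [_ aB1].
by rewrite exchange_setI_B1 // (cardsD1 a (X :&: B1)) aA.
Qed.

Lemma eq_B2_of_setI_B1_eq0 X : X \subset E -> #|X| = r -> X :&: B1 = set0 -> X = B2.
Proof.
move=> sXE cX X1; apply/eqP; rewrite eqEcard cX card_B2 leqnn andbT.
apply/subsetP => z zX; move: (subsetP sXE z zX); rewrite inE.
by case/orP => // zB1; move: X1 => /setP /(_ z); rewrite !inE zX zB1.
Qed.

Definition good_split X := good X && good (E :\: X).

Definition good_move X a b :=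
  [&& a \in X :&: B1, b \in B2 :\: X & good_split (exchange X a b)].

(* Trading, in order, the elements of [ta] (listing [X :&: B1]) against those of
   [tb] (listing [B2 :\: X]) walks from [X] to [B2]; [window X ta tb k] is the set
   after [k] trades.  For [X = B1] these are the cyclic windows of [ta ++ tb]. *)
Definition window X ta tb k := [set z in drop k ta ++ take k tb] :|: X :&: B2.

Definition completable X := exists ta tb,
  [/\ uniq ta && uniq tb, size ta = size tb, [set z in ta] = X :&: B1,
      [set z in tb] = B2 :\: X & forall k, k <= size ta -> good_split (window X ta tb k)].

Lemma completable_exchange X a b : X \subset E -> good_split X -> a \in X :&: B1 ->
  b \in B2 :\: X -> completable (exchange X a b) -> completable X.
Proof.
move=> sXE gX /setIP [aX aB1] /setDP [bB2 bX] [ta [tb [/andP [uta utb] sz eta etb gw]]].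
have aB2 := B1_notin_B2 aB1; have bB1 := B2_notin_B1 bB2.
have mta z : (z \in ta) = (z \in exchange X a b :&: B1) by rewrite -eta inE.
have mtb z : (z \in tb) = (z \in B2 :\: exchange X a b) by rewrite -etb inE.
have eA : [set z in a :: ta] = X :&: B1.
  by rewrite set_cons eta /exchange; set_solve.
exists (a :: ta), (b :: tb); split => /=.
- by rewrite uta utb mta mtb /exchange !inE; set_simpl.
- by rewrite sz.
- exact: eA.
- by rewrite set_cons etb /exchange; set_solve.
case=> [_|k /gw]; last first.
  suff -> : window X (a :: ta) (b :: tb) k.+1 = window (exchange X a b) ta tb k by [].
  by rewrite /window /exchange; set_solve.
by rewrite /window /= cats0 eA -setIUr (setIidPl sXE).
Qed.

Lemma completable_B2 : completable B2.
Proof.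
have eB1 : E :\: B2 = B1 by rewrite setDUl setDv setU0; apply/setDidPl.
exists [::], [::]; split => //.
- by rewrite setIC (disjoint_setI0 disjoint_B12); apply/setP => z; rewrite !inE.
- by rewrite setDv; apply/setP => z; rewrite !inE.
case=> // _; suff -> : window B2 [::] [::] 0 = B2 by rewrite /good_split eB1 good_B1 good_B2.
by rewrite /window setIid; apply/setP => z; rewrite !inE.
Qed.

Lemma exchange_subset_E X a b : X \subset E -> b \in B2 -> exchange X a b \subset E.
Proof. by move=> sXE bB2; rewrite exchange_subset // inE bB2 orbT. Qed.

Lemma completable_card1 X : X \subset E -> #|X| = r -> #|X :&: B1| = 1 ->
  good_split X -> completable X.
Proof.
move=> sXE cX c1 gX.
have /cards1P [a eA] : #|X :&: B1| == 1 by rewrite c1.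
have /cards1P [b eB] : #|B2 :\: X| == 1 by rewrite card_B2_setD // c1.
have aA : a \in X :&: B1 by rewrite eA set11.
have bB : b \in B2 :\: X by rewrite eB set11.
apply: (completable_exchange sXE gX aA bB).
move: aA bB => /setIP [aX aB1] /setDP [bB2 bX].
rewrite (@eq_B2_of_setI_B1_eq0 (exchange X a b)); first exact: completable_B2.
- exact: exchange_subset_E.
- by rewrite card_exchange.
- by rewrite exchange_setI_B1 // eA setDv.
Qed.

Lemma card_bad_exchange X : #|X| = r ->
  #|[set p in setX (X :&: B1) (B2 :\: X) | ~~ good (exchange X p.1 p.2)]| <= #|X :&: B1|.
Proof.
move=> cX; rewrite -(card_in_imset (f := fst)).
  apply: subset_leq_card; apply/subsetP => z /imsetP [[a b]].
  by rewrite in_set in_setX => /andP [/andP [aA _] _] ->.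
move=> [a b] [a' b']; rewrite !inE /= => /andP [/andP [/andP [aX _] /andP [bX _]] gb].
move=> /andP [/andP [_ /andP [b'X _]] gb'] /= eaa; subst a'.
case: (eqVneq b b') => [-> //|bb'].
by have := good_exchange_targets cX aX bX b'X bb'; rewrite (negbTE gb) (negbTE gb').
Qed.

Lemma card_bad_exchange_setD X : X \subset E -> #|X| = r ->
  #|[set p in setX (X :&: B1) (B2 :\: X) | ~~ good (E :\: exchange X p.1 p.2)]|
    <= #|B2 :\: X|.
Proof.
move=> sXE cX; rewrite -(card_in_imset (f := snd)).
  apply: subset_leq_card; apply/subsetP => z /imsetP [[a b]].
  by rewrite in_set in_setX => /andP [/andP [_ bB] _] ->.
move=> [a b] [a' b']; rewrite !inE /= => /andP [/andP [/andP [aX aB1] /andP [bX bB2]] gb].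
move=> /andP [/andP [/andP [a'X a'B1] _] gb'] /= ebb'; subst b'.
case: (eqVneq a a') => [-> //|aa'].
have bE : b \in E by rewrite inE bB2 orbT.
have B1_E z : z \in B1 -> z \in E by rewrite inE => ->.
rewrite (setD_exchange (B1_E _ aB1) bE aX bX) in gb.
rewrite (setD_exchange (B1_E _ a'B1) bE a'X bX) in gb'.
have bY : b \in E :\: X by rewrite inE bX.
have notin_Y z : z \in X -> z \notin E :\: X by rewrite inE => ->.
have := good_exchange_targets (card_setD_E sXE cX) bY (notin_Y _ aX) (notin_Y _ a'X) aa'.
by rewrite (negbTE gb) (negbTE gb').
Qed.

Lemma exists_good_move X : X \subset E -> #|X| = r -> 3 <= #|X :&: B1| ->
  exists a b, good_move X a b.
Proof.
move=> sXE cX m3.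
set P := setX (X :&: B1) (B2 :\: X).
set badX := [set p in P | ~~ good (exchange X p.1 p.2)].
set badY := [set p in P | ~~ good (E :\: exchange X p.1 p.2)].
have [[a b] Pab] : exists2 p, p \in P & p \notin badX :|: badY.
  apply/subsetPn; apply: contraTN m3 => /subset_leq_card.
  have := card_bad_exchange cX; have := card_bad_exchange_setD sXE cX.
  rewrite cardsX card_B2_setD // -ltnNge => hY hX le.
  have := leq_trans le (leq_trans (leq_card_setU badX badY) (leq_add hX hY)).
  by nia.
move: Pab; rewrite in_setU /badX /badY !inE /= => /andP [/andP [aX aB1] /andP [bX bB2]].
rewrite aX aB1 bX bB2 /= negb_or !negbK => /andP [gX gY].
by exists a, b; rewrite /good_move /good_split !inE aX aB1 bX bB2 gX gY.
Qed.

Definition blocked X u v x y :=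
  [/\ X :&: B1 = [set u; v], B2 :\: X = [set x; y], u != v, x != y &
      [&& ~~ good (exchange X u x), ~~ good (exchange X v y),
          ~~ good (E :\: exchange X u y) & ~~ good (E :\: exchange X v x)]].

Lemma good_move_or_blocked X : X \subset E -> #|X| = r -> #|X :&: B1| = 2 ->
  (exists a b, good_move X a b) \/ exists u v x y, blocked X u v x y.
Proof.
move=> sXE cX c2.
have [/existsP [a /existsP [b gab]] | stuck] := boolP [exists a, exists b, good_move X a b].
  by left; exists a, b.
right.
have /cards2P [u [v [uv eA]]] : #|X :&: B1| == 2 by rewrite c2.
have /cards2P [x [y [xy eB]]] : #|B2 :\: X| == 2 by rewrite card_B2_setD // c2.
have no_move a b : a \in [set u; v] -> b \in [set x; y] ->
    ~~ good (exchange X a b) || ~~ good (E :\: exchange X a b).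
  move=> aA bB; move: stuck => /existsPn /(_ a) /existsPn /(_ b).
  by rewrite /good_move /good_split eA eB aA bB /= negb_and.
have [uA vA] : u \in X :&: B1 /\ v \in X :&: B1 by rewrite eA !inE !eqxx orbT.
have [xB yB] : x \in B2 :\: X /\ y \in B2 :\: X by rewrite eB !inE !eqxx orbT.
move: (uA) (vA) (xB) (yB) => /setIP [uX uB1] /setIP [vX vB1] /setDP [xB2 xX] /setDP [yB2 yX].
have cY := card_setD_E sXE cX.
have inY b : b \in B2 :\: X -> b \in E :\: X.
  by rewrite !inE => /andP [-> ->]; rewrite orbT.
have notinY a : a \in X -> a \notin E :\: X by rewrite inE => ->.
have compl a b : a \in X :&: B1 -> b \in B2 :\: X ->
    E :\: exchange X a b = exchange (E :\: X) b a.
  move=> /setIP [aX aB1] /setDP [bB2 bX].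
  by apply: setD_exchange; rewrite // inE ?aB1 ?bB2 ?orbT.
have row_u := good_exchange_targets cX uX xX yX xy.
have row_v := good_exchange_targets cX vX xX yX xy.
have col_x := good_exchange_sources cX uX vX xX uv.
have col_y := good_exchange_sources cX uX vX yX uv.
have crow_x := good_exchange_targets cY (inY _ xB) (notinY _ uX) (notinY _ vX) uv.
have crow_y := good_exchange_targets cY (inY _ yB) (notinY _ uX) (notinY _ vX) uv.
have ccol_u := good_exchange_sources cY (inY _ xB) (inY _ yB) (notinY _ uX) xy.
have ccol_v := good_exchange_sources cY (inY _ xB) (inY _ yB) (notinY _ vX) xy.
rewrite -!compl // in crow_x crow_y ccol_u ccol_v.
have nux := no_move u x (set21 u v) (set21 x y).
have nuy := no_move u y (set21 u v) (set22 x y).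
have nvx := no_move v x (set22 u v) (set21 x y).
have nvy := no_move v y (set22 u v) (set22 x y).
have /orP [p1 | p2] := grid2_blocked row_u row_v col_x col_y crow_x crow_y ccol_u ccol_v
  nux nuy nvx nvy.
- by exists u, v, x, y; split.
- exists u, v, y, x; split=> //; first by rewrite setUC.
  by rewrite eq_sym.
Qed.

Lemma completable_detour X ai bj u v x y : X \subset E -> #|X| = r -> good_split X ->
  ai \in X :&: B1 -> bj \in B2 :\: X -> blocked (exchange X ai bj) u v x y ->
  completable X.
Proof.
move=> sXE cX gX /setIP [aiX aiB1] /setDP [bjB2 bjX] [eA eB uv xy].
set X' := exchange X ai bj.
case/and4P=> bad_ux bad_vy bad_cuy bad_cvx.
have aiB2 := B1_notin_B2 aiB1; have bjB1 := B2_notin_B1 bjB2.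
have aiX' : ai \notin X' by rewrite !inE eqxx; set_simpl.
have bjX' : bj \in X' by rewrite !inE eqxx.
have [uA vA] : u \in X' :&: B1 /\ v \in X' :&: B1 by rewrite eA !inE !eqxx orbT.
have [xB yB] : x \in B2 :\: X' /\ y \in B2 :\: X' by rewrite eB !inE !eqxx orbT.
move: uA vA xB yB => /setIP [uX' uB1] /setIP [vX' vB1] /setDP [xB2 xX'] /setDP [yB2 yX'].
have uB2 := B1_notin_B2 uB1; have vB2 := B1_notin_B2 vB1.
have xB1 := B2_notin_B1 xB2; have yB1 := B2_notin_B1 yB2.
have uX : u \in X by move: uX'; rewrite /X' !inE; set_simpl; move=> /andP [_ ->].
have vX : v \in X by move: vX'; rewrite /X' !inE; set_simpl; move=> /andP [_ ->].
have xX : x \notin X by move: (xX'); rewrite /X' !inE; set_simpl.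
have yX : y \notin X by move: (yX'); rewrite /X' !inE; set_simpl.
have good_by (Z W : {set T}) a b : #|Z| = r -> a \in Z -> b \notin Z ->
    exchange Z a b = W -> ~~ good W -> good Z.
  by move=> cZ aZ bZ <-; apply: good_of_bad_exchange.
(* Trade [ai] for [x], then [u] for [y]: each new set and each complement is one
   exchange away from a bad set of the blocked configuration. *)
pose X1 := exchange X ai x; pose X2 := exchange X1 u y.
have sX1E : X1 \subset E by apply: exchange_subset_E.
have cX1 : #|X1| = r by rewrite card_exchange.
have uX1 : u \in X1 by rewrite /X1 /exchange !inE; set_simpl.
have yX1 : y \notin X1 by rewrite /X1 /exchange !inE; set_simpl.
have sX2E : X2 \subset E by apply: exchange_subset_E.
have cX2 : #|X2| = r by rewrite card_exchange.
have [gX1 gX2] : good_split X1 /\ good_split X2.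
  split; apply/andP; split;
    [ apply: (good_by _ _ u bj cX1 uX1 _ _ bad_ux)
    | apply: (good_by _ _ bj v (card_setD_E sX1E cX1) _ _ _ bad_cvx)
    | apply: (good_by _ _ y bj cX2 _ _ _ bad_ux)
    | apply: (good_by _ _ bj x (card_setD_E sX2E cX2) _ _ _ bad_cuy) ];
    unfold X2, X1, X', exchange; first [set_solve | by rewrite !inE; set_simpl].
apply: (completable_exchange sXE gX (_ : ai \in X :&: B1) (_ : x \in B2 :\: X)).
- by rewrite inE aiX.
- by rewrite inE xX.
apply: (completable_exchange sX1E gX1 (_ : u \in X1 :&: B1) (_ : y \in B2 :\: X1)).
- by rewrite inE uX1.
- by rewrite inE yX1.
apply: completable_card1 => //.
rewrite /X2 !exchange_setI_B1 // -(exchange_setI_B1 X aiB1 bjB2) -/X' eA.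
have -> : [set u; v] :\ u = [set v] by set_solve.
by rewrite cards1.
Qed.


Lemma completable_card2 X a b : X \subset E -> #|X| = r -> #|X :&: B1| = 2 ->
  good_split X -> good_move X a b -> completable X.
Proof.
move=> sXE cX c2 gX /and3P [aA /[dup] bB /setDP [bB2 bX] gXab].
apply: (completable_exchange sXE gX aA bB); apply: completable_card1 => //.
- exact: exchange_subset_E.
- by move: aA => /setIP [aX _]; rewrite card_exchange.
- by rewrite card_exchange_setI_B1 // c2.
Qed.

Lemma completable_card3 X : X \subset E -> #|X| = r -> #|X :&: B1| = 3 ->
  good_split X -> completable X.
Proof.
move=> sXE cX c3 gX.
have [|ai [bj /and3P [aiA /[dup] bjB /setDP [bjB2 bjX] gX']]] := exists_good_move sXE cX.
  by rewrite c3.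
have sX'E : exchange X ai bj \subset E by apply: exchange_subset_E.
have cX' : #|exchange X ai bj| = r by move: aiA => /setIP [aiX _]; rewrite card_exchange.
have [[a [b gm]] | [u [v [x [y bl]]]]] := good_move_or_blocked sX'E cX'
  (etrans (card_exchange_setI_B1 aiA bjB2) (congr1 predn c3)).
- apply: (completable_exchange sXE gX aiA bjB).
  by apply: (completable_card2 sX'E cX' _ gX' gm); rewrite card_exchange_setI_B1 // c3.
- exact: completable_detour sXE cX gX aiA bjB bl.
Qed.

Lemma completable_card_neq2 X : X \subset E -> #|X| = r -> #|X :&: B1| != 2 ->
  good_split X -> completable X.
Proof.
move Hm: #|X :&: B1| => m; elim: m X Hm => [|m IH] X cm sXE cX n2 gX.
  rewrite (eq_B2_of_setI_B1_eq0 sXE cX); first exact: completable_B2.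
  by apply/eqP; rewrite -cards_eq0 cm.
case: m IH cm n2 => [|[|[|m]]] IH cm n2 //.
- exact: completable_card1.
- exact: completable_card3.
have [|a [b /and3P [aA /[dup] bB /setDP [bB2 bX] gXab]]] := exists_good_move sXE cX.
  by rewrite cm.
apply: (completable_exchange sXE gX aA bB); apply: IH => //.
- by rewrite card_exchange_setI_B1 // cm.
- exact: exchange_subset_E.
- by move: aA => /setIP [aX _]; rewrite card_exchange.
Qed.

Lemma completable_B1 : completable B1.
Proof.
have sB1E : B1 \subset E := subsetUl B1 B2.
have eB2 : B2 :\: B1 = B2 by apply/setDidPl; rewrite disjoint_sym.
have gB1 : good_split B1 by rewrite /good_split setDUl setDv set0U eB2 good_B1 good_B2.
have cB1 : #|B1 :&: B1| = r by rewrite setIid.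
have [r2 | r_neq2] := eqVneq r 2; last by apply: completable_card_neq2; rewrite ?cB1.
have [[a [b gm]] | [u [v [x [y [eA eB uv xy]]]]]] :=
  good_move_or_blocked sB1E card_B1 (etrans cB1 r2).
  exact: completable_card2 sB1E card_B1 (etrans cB1 r2) gB1 gm.
(* For r = 2 two of the bad sets of a blocked configuration differ by one exchange. *)
case/and4P=> bad_ux _ bad_cuy _.
rewrite setIid in eA; rewrite eB2 in eB.
have [uB1 vB1] : u \in B1 /\ v \in B1 by rewrite eA !inE !eqxx orbT.
have [xB2 yB2] : x \in B2 /\ y \in B2 by rewrite eB !inE !eqxx orbT.
have xB1 := B2_notin_B1 xB2; have yB1 := B2_notin_B1 yB2.
have cX : #|exchange B1 u x| = r by rewrite card_exchange.
have vX : v \in exchange B1 u x by rewrite !inE; set_simpl.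
have uX : u \notin exchange B1 u x by rewrite !inE; set_simpl.
have := good_exchange cX vX uX.
have -> : exchange (exchange B1 u x) v u = E :\: exchange B1 u y.
  by rewrite /exchange eA eB; set_solve.
by rewrite (negbTE bad_ux) (negbTE bad_cuy).
Qed.

Lemma good_cyclic_ordering : exists s : seq T,
  [/\ uniq s, size s = r + r, [set z in take r s] = B1, [set z in drop r s] = B2 &
      forall i, i < r + r -> good [set z in take r (rot i s)]].
Proof.
have [ta [tb [/andP [uta utb] sz eta etb gw]]] := completable_B1.
rewrite setIid in eta; rewrite (setDidPl _) 1?disjoint_sym // in etb.
have mta z : (z \in ta) = (z \in B1) by rewrite -eta inE.
have mtb z : (z \in tb) = (z \in B2) by rewrite -etb inE.
have sta : size ta = r by rewrite -card_B1 -eta cardsE; apply/esym/card_uniqP.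
have uab : uniq (ta ++ tb).
  by rewrite cat_uniq uta utb andbT; apply/hasPn => z; rewrite mtb mta; apply: B2_notin_B1.
have eE : [set z in ta ++ tb] = E by apply/setP => z; rewrite !inE mem_cat mta mtb.
have ew k : window B1 ta tb k = [set z in drop k ta ++ take k tb].
  by rewrite /window (disjoint_setI0 disjoint_B12) setU0.
exists (ta ++ tb); split => //.
- by rewrite size_cat -sz sta.
- by rewrite -sta take_size_cat.
- by rewrite -sta drop_size_cat.
move=> i lt_i; have [le_ir | lt_ri] := leqP i r.
  have /andP [g _] := gw i (leq_trans le_ir (eq_leq (esym sta))).
  by rewrite -sta take_rot_cat // ?sta //; rewrite ew in g.
have [j -> lt_jr] : exists2 j, i = r + j & j < r by exists (i - r); lia.
have /andP [_ g] := gw j (leq_trans (ltnW lt_jr) (eq_leq (esym sta))).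
rewrite -sta take_rot_addn_cat // ?sta ?(ltnW lt_jr) //.
by rewrite ew -eE setD_drop_take_cat in g.
Qed.

End CyclicOrdering.

Theorem theorem2p9 (T : finType) (M : matroid T) (r : nat) (B1 B2 : {set T}) :
  sparse_paving M -> mrank M = r ->
  is_basis M B1 -> is_basis M B2 -> [disjoint B1 & B2] ->
  exists s : seq T,
    [/\ uniq s, size s = (r + r)%N,
        [set x in take r s] = B1, [set x in drop r s] = B2 &
        forall i, (i < r + r)%N -> is_basis M [set x in take r (rot i s)]].
Proof.
move=> hsp hr hB1 hB2 dis.
have cB1 : #|B1| = r by rewrite -hr (mrank_basis hB1).
have cB2 : #|B2| = r by rewrite -hr (mrank_basis hB2).
apply: (good_cyclic_ordering hB1 hB2 cB1 cB2 dis) => X a b cX.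
by apply: sparse_paving_exchange; rewrite // cX.
Qed.
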